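(* Let $0<\rho<\mu$, let $\beta$ be the unique real with $\rho(\beta)=\rho$, let $\ell\in\mathbb{N}$ be such that $t=\ell\rho$ is an integer, and let $0<\varepsilon<1$. Let $X_\beta$ have distribution $P_\beta$ and set $$\delta=\ell^{1/2}\,\frac{\mathrm{Var}(\mathrm{wt}_{\mathcal{A}}(X_\beta))^{1/2}}{(1-\varepsilon)^{1/2}}.$$ Then $$\sum_{\substack{j\in\mathbb{Z}\\ -\delta<j<\delta}}\bigl|\mathcal{S}^\ell_{t+j}\bigr|\ \ge\ \varepsilon\, q^{\ell H_\rho-|\beta|\delta}.$$
   Context: Let $q>1$ be fixed. Let $\mathcal{A}$ be a finite abelian group with $|\mathcal{A}|\ge 2$ and $\mathrm{wt}_{\mathcal{A}}:\mathcal{A}\to\mathbb{Z}_{\ge 0}$ a weight function with $\mathrm{wt}_{\mathcal{A}}(a)=0$ iff $a=0$, extended additively to $\mathcal{A}^\ell$ by $\mathrm{wt}_{\Sigma\mathcal{A}}(v)=\sum_{i=1}^\ell\mathrm{wt}_{\mathcal{A}}(v_i)$. For an integer $s$, $\mathcal{S}^\ell_s=\{v\in\mathcal{A}^\ell:\mathrm{wt}_{\Sigma\mathcal{A}}(v)=s\}$. Let $\mu=\max_a\mathrm{wt}_{\mathcal{A}}(a)$. For $\beta\in\mathbb{R}$ let $P_\beta(a)=q^{-\beta\,\mathrm{wt}_{\mathcal{A}}(a)}/\mathcal{Z}(\beta)$, $\mathcal{Z}(\beta)=\sum_aq^{-\beta\,\mathrm{wt}_{\mathcal{A}}(a)}$,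 $\rho(\beta)=\sum_aP_\beta(a)\mathrm{wt}_{\mathcal{A}}(a)$; $\rho$ is a bijection $\mathbb{R}\to(0,\mu)$. For $\rho=\rho(\beta)$, $H_\rho=-\sum_{a:P_\beta(a)\ne0}P_\beta(a)\log_qP_\beta(a)$. *)

From HB Require Import structures.
From mathcomp Require Import all_boot all_order all_algebra.
From mathcomp Require Import all_classical all_reals all_analysis.
Set Implicit Arguments. Unset Strict Implicit. Unset Printing Implicit Defensive.
Import Order.TTheory GRing.Theory Num.Theory.
Local Open Scope ring_scope.

Section Defs.
Variables (R : realType) (A : finZmodType) (wt : A -> nat) (q : R).

Definition mu_wt : nat := (\max_(a : A) wt a)%N.

Definition qpow (x : R) : R := powR q x.

Definition Zpart (beta : R) : R := \sum_(a : A) qpow (- beta * (wt a)%:R).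

Definition Pb (beta : R) (a : A) : R := qpow (- beta * (wt a)%:R) / Zpart beta.

Definition rho_of (beta : R) : R := \sum_(a : A) Pb beta a * (wt a)%:R.

Definition var_wt (beta : R) : R :=
  \sum_(a : A) Pb beta a * ((wt a)%:R - rho_of beta) ^+ 2.

(* H_rho for rho = rho(beta), entropy in base q *)
Definition Hq (beta : R) : R :=
  - \sum_(a : A | Pb beta a != 0) Pb beta a * (ln (Pb beta a) / ln q).

Definition wtsum (l : nat) (v : {ffun 'I_l -> A}) : nat := (\sum_(i < l) wt (v i))%N.

Definition cardS (l : nat) (s : int) : nat :=
  #|[set v : {ffun 'I_l -> A} | (wtsum v)%:Z == s]|.

(* sum over the integers j with -delta < j < delta of |S^l_(t+j)|.
   The integers j range over [-M, M] with M = |ceil delta|, which contains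
   every integer of (-delta, delta). *)
Definition window_sum (l : nat) (t : int) (delta : R) : R :=
  let M := absz (Num.ceil delta) in
  \sum_(k < (M + M).+1 |
        (- delta < ((k%:Z - M%:Z)%:~R : R)) && (((k%:Z - M%:Z)%:~R : R) < delta))
     (cardS l (t + (k%:Z - M%:Z)))%:R.

End Defs.

(** Let [P^l] be the product of [l] copies of the Gibbs distribution [P_beta]
    on [A^l].  The weight of a word is a sum of [l] independent copies of
    [wt(X_beta)], with mean [l rho = t] and variance [l Var(wt(X_beta))], so by
    Chebyshev's inequality the words whose weight lies strictly within [delta]
    of [t] carry [P^l]-mass at least [eps].  A word [v] of weight [w] has mass
    [P^l(v) = q^(beta (t - w) - l H_rho)], which on this window is at most
    [q^(|beta| delta - l H_rho)]; hence the window contains at least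
    [eps q^(l H_rho - |beta| delta)] words. *)
From HB Require Import structures.
From mathcomp Require Import ring lra zify.
From mathcomp Require Import all_boot all_order all_algebra.
From mathcomp Require Import all_classical all_reals all_analysis.
Set Implicit Arguments.
Unset Strict Implicit.
Unset Printing Implicit Defensive.
Import Order.TTheory GRing.Theory Num.Theory.
Local Open Scope ring_scope.

Section ProductMoments.
Variables (R : comPzRingType) (A : finType) (l : nat) (P d : A -> R).
Hypotheses (sum_P : \sum_a P a = 1) (sum_Pd : \sum_a P a * d a = 0).

Local Notation Pl v := (\prod_i P (v i)).

Lemma sum_prod_mass : \sum_(v : {ffun 'I_l -> A}) Pl v = 1.
Proof. by rewrite -(bigA_distr_bigA (fun _ => P)) big1. Qed.

Lemma sum_prod_mass_mul2 (k m : 'I_l) :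
  \sum_(v : {ffun 'I_l -> A}) Pl v * (d (v k) * d (v m))
    = (k == m)%:R * \sum_a P a * d a ^+ 2.
Proof.
pose F i a := P a * ((if i == k then d a else 1) * (if i == m then d a else 1)).
have prod_if (j : 'I_l) (x : 'I_l -> R) :
    \prod_i (if i == j then x i else 1) = x j.
  by rewrite -big_mkcond big_pred1_eq.
transitivity (\sum_(v : {ffun 'I_l -> A}) \prod_i F i (v i)).
  apply: eq_bigr => v _; rewrite /F big_split /= big_split /=.
  by rewrite (prod_if k (fun i => d (v i))) (prod_if m (fun i => d (v i))).
rewrite -bigA_distr_bigA (bigD1 k) //=.
have [eq_km|neq_km] := eqVneq k m.
  subst m; rewrite mul1r [X in _ * X]big1 ?mulr1; last first.
    move=> i /negbTE neq_ik; rewrite /F neq_ik -{3}sum_P.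
    by apply: eq_bigr => a _; rewrite !mulr1.
  by apply: eq_bigr => a _; rewrite /F !eqxx expr2.
rewrite mul0r (eq_bigr (fun a => P a * d a)) ?sum_Pd ?mul0r //.
by move=> a _; rewrite /F eqxx (negbTE neq_km) mulr1.
Qed.

Lemma sum_prod_mass_sqr :
  \sum_(v : {ffun 'I_l -> A}) Pl v * (\sum_i d (v i)) ^+ 2
    = l%:R * \sum_a P a * d a ^+ 2.
Proof.
transitivity (\sum_(k < l) \sum_(m < l)
    \sum_(v : {ffun 'I_l -> A}) Pl v * (d (v k) * d (v m))).
  symmetry; under eq_bigr => k _ do rewrite exchange_big /=.
  rewrite exchange_big /=; apply: eq_bigr => v _.
  rewrite expr2 big_distrl /= mulr_sumr; apply: eq_bigr => k _.
  by rewrite big_distrr /= mulr_sumr.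
under eq_bigr => k _ do under eq_bigr => m _ do rewrite sum_prod_mass_mul2.
set V := \sum_a P a * d a ^+ 2.
rewrite (eq_bigr (fun _ => V)) ?sumr_const ?card_ord ?mulr_natl //.
move=> k _; rewrite (bigD1 k) //= eqxx mul1r big1 ?addr0 //.
by move=> m /negbTE; rewrite eq_sym => ->; rewrite mul0r.
Qed.

End ProductMoments.

Lemma chebyshev_mass (R : realFieldType) (I : finType) (p f : I -> R) (delta : R) :
  (forall i, 0 <= p i) -> \sum_i p i = 1 -> 0 < delta ->
  1 - (\sum_i p i * f i ^+ 2) / delta ^+ 2 <= \sum_(i | `|f i| < delta) p i.
Proof.
move=> p_ge0 sum_p delta_gt0.
have delta2_gt0 : 0 < delta ^+ 2 by rewrite exprn_gt0.
have tail : (\sum_(i | ~~ (`|f i| < delta)) p i) * delta ^+ 2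
    <= \sum_i p i * f i ^+ 2.
  rewrite mulr_suml [leRHS](bigID (fun i => `|f i| < delta)) /= ler_wpDl //.
    by apply: sumr_ge0 => i _; rewrite mulr_ge0 ?sqr_ge0.
  apply: ler_sum => i; rewrite -leNgt => le_delta; apply: ler_wpM2l => //.
  by rewrite -[f i ^+ 2]real_normK ?num_real // lerXn2r ?nnegrE ?(ltW delta_gt0).
rewrite -ler_pdivlMr // in tail.
move: sum_p; rewrite (bigID (fun i => `|f i| < delta)) /=; lra.
Qed.

Section Gibbs.
Variables (R : realType) (A : finZmodType) (wt : A -> nat) (q : R).
Hypothesis q_gt1 : 1 < q.
Variable beta : R.

Local Notation P := (Pb wt q beta).
Local Notation Z := (Zpart wt q beta).
Local Notation rho := (rho_of wt q beta).

Lemma qpowE x : qpow q x = expR (x * ln q).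
Proof. by rewrite /qpow /powR gt_eqF // (lt_trans ltr01 q_gt1). Qed.

Lemma Zpart_gt0 : 0 < Z.
Proof.
rewrite /Zpart (bigD1 0) //= ltr_pwDl ?qpowE ?expR_gt0 //.
by apply: sumr_ge0 => a _; rewrite qpowE expR_ge0.
Qed.

Lemma Pb_gt0 a : 0 < P a.
Proof. by rewrite divr_gt0 ?Zpart_gt0 // qpowE expR_gt0. Qed.

Lemma sum_Pb : \sum_a P a = 1.
Proof. by rewrite -mulr_suml divff // gt_eqF // Zpart_gt0. Qed.

Lemma sum_Pb_centered : \sum_a P a * ((wt a)%:R - rho) = 0.
Proof.
under eq_bigr do rewrite mulrBr.
by rewrite sumrB -mulr_suml sum_Pb mul1r subrr.
Qed.

Lemma var_wt_gt0 : wt 0 = 0%N -> rho != 0 -> 0 < var_wt wt q beta.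
Proof.
move=> wt0 rho_neq0; rewrite /var_wt (bigD1 0) //= ltr_pwDl //.
  by rewrite mulr_gt0 ?Pb_gt0 // wt0 sub0r sqrrN lt_def sqr_ge0 sqrf_eq0 rho_neq0.
by apply: sumr_ge0 => a _; rewrite mulr_ge0 ?sqr_ge0 // ltW ?Pb_gt0.
Qed.

(* [ln P_beta(a) = -beta wt(a) ln q - ln Z], so the entropy splits as below. *)
Lemma Hq_Gibbs : Hq wt q beta = beta * rho + ln Z / ln q.
Proof.
have lnq_neq0 : ln q != 0 by rewrite gt_eqF // ln_gt0.
rewrite /Hq (eq_bigl predT) => [|a]; last by rewrite gt_eqF ?Pb_gt0.
rewrite /rho_of mulr_sumr -sumrN.
transitivity (\sum_a P a * (beta * (wt a)%:R) + \sum_a P a * (ln Z / ln q)).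
  rewrite -big_split /=; apply: eq_bigr => a _.
  by rewrite ln_div ?posrE ?qpowE ?expR_gt0 ?Zpart_gt0 // expRK; field.
rewrite -mulr_suml sum_Pb mul1r; congr (_ + _).
by apply: eq_bigr => a _; rewrite mulrCA.
Qed.

Lemma prod_Pb l (v : {ffun 'I_l -> A}) :
  \prod_i P (v i)
    = qpow q (beta * (l%:R * rho - (wtsum wt v)%:R) - l%:R * Hq wt q beta).
Proof.
have lnq_neq0 : ln q != 0 by rewrite gt_eqF // ln_gt0.
rewrite prodf_div prodr_const card_ord.
under eq_bigr do rewrite qpowE.
rewrite -expR_sum -mulr_suml -mulr_sumr -natr_sum qpowE Hq_Gibbs.
have -> : (beta * (l%:R * rho - (wtsum wt v)%:R) - l%:R * (beta * rho + ln Z / ln q))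
      * ln q = - beta * (wtsum wt v)%:R * ln q - l%:R * ln Z by field.
by rewrite expRD expRN expRM_natl lnK // posrE Zpart_gt0.
Qed.

Lemma prod_Pb_mul_le l (v : {ffun 'I_l -> A}) (delta : R) :
  `|(wtsum wt v)%:R - l%:R * rho| <= delta ->
  \prod_i P (v i) * qpow q (l%:R * Hq wt q beta - `|beta| * delta) <= 1.
Proof.
move=> near_mean; rewrite prod_Pb !qpowE -expRD expR_le1 -mulrDl.
rewrite pmulr_lle0 ?ln_gt0 // addrA subrK subr_le0.
by rewrite (le_trans (ler_norm _)) // normrM distrC ler_wpM2l.
Qed.

Lemma sum_prod_Pb_sqr l :
  \sum_(v : {ffun 'I_l -> A}) \prod_i P (v i) * ((wtsum wt v)%:R - l%:R * rho) ^+ 2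
    = l%:R * var_wt wt q beta.
Proof.
rewrite -(sum_prod_mass_sqr l sum_Pb sum_Pb_centered); apply: eq_bigr => v _.
by rewrite sumrB sumr_const card_ord mulr_natl -natr_sum.
Qed.

End Gibbs.

Section Window.
Variables (R : realType) (A : finZmodType) (wt : A -> nat).

Lemma window_index (delta : R) (j : int) :
  0 < delta -> `|j%:~R| < delta ->
  let M := `|Num.ceil delta|%N in
  exists k : 'I_(M + M).+1, k%:Z - M%:Z = j.
Proof.
move=> delta_gt0 j_lt M.
have M_ceil : M%:Z = Num.ceil delta by rewrite gez0_abs // ceil_ge0; lra.
have j_bound : `|j| < M%:Z.
  by rewrite M_ceil -(ltr_int R) intr_norm (lt_le_trans j_lt) ?ceil_ge.
have k_lt : (`|(j + M%:Z)%R|%N < (M + M).+1)%N by move: j_bound; lia.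
by exists (Ordinal k_lt) => /=; move: j_bound; lia.
Qed.

Lemma window_sum_ge_card l (t : int) (delta : R) : 0 < delta ->
  \sum_(v : {ffun 'I_l -> A} | `|(wtsum wt v)%:R - t%:~R| < delta) 1
    <= window_sum wt l t delta.
Proof.
move=> delta_gt0; rewrite /window_sum.
under [leRHS]eq_bigr => k _.
  rewrite /cardS -sum1_card natr_sum big_mkcond /=.
  under eq_bigr do rewrite inE.
over.
rewrite exchange_big /= [leLHS]big_mkcond /=; apply: ler_sum => v _.
case: ifP => near_t; last by apply: sumr_ge0 => k _; case: ifP.
set j : int := (wtsum wt v)%:Z - t.
have j_val : (j%:~R : R) = (wtsum wt v)%:R - t%:~R by rewrite rmorphB.
have near_j : `|(j%:~R : R)| < delta by rewrite j_val.
have [k k_j] := window_index delta_gt0 near_j.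
rewrite (bigD1 k) /=; last by rewrite k_j j_val -ltr_norml.
rewrite k_j.
have -> : t + j = (wtsum wt v)%:Z by rewrite addrC subrK.
by rewrite eqxx lerDl; apply: sumr_ge0 => i _; case: ifP.
Qed.

End Window.

Theorem mainTheorem7 (R : realType) (A : finZmodType) (wt : A -> nat) (q : R)
  (hq : 1 < q) (hA : (1 < #|A|)%N)
  (hwt : forall a : A, (wt a == 0%N) = (a == 0))
  (rho beta : R) (hrho0 : 0 < rho) (hrho1 : rho < (mu_wt wt)%:R)
  (hbeta : rho_of wt q beta = rho)
  (l : nat) (hl : (0 < l)%N) (t : int) (ht : t%:~R = l%:R * rho)
  (eps : R) (heps0 : 0 < eps) (heps1 : eps < 1) :
  let delta := Num.sqrt l%:R * Num.sqrt (var_wt wt q beta) / Num.sqrt (1 - eps) in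
  window_sum wt l t delta >=
    eps * qpow q (l%:R * Hq wt q beta - `|beta| * delta).
Proof.
set delta := Num.sqrt l%:R * _ / _ => /=.
set V := var_wt wt q beta; set H := Hq wt q beta.
pose Pl (v : {ffun 'I_l -> A}) := \prod_i Pb wt q beta (v i).
pose dev (v : {ffun 'I_l -> A}) : R := (wtsum wt v)%:R - t%:~R.
have V_gt0 : 0 < V by rewrite var_wt_gt0 ?hbeta ?gt_eqF //; apply/eqP; rewrite hwt.
have delta_gt0 : 0 < delta by rewrite divr_gt0 ?mulr_gt0 ?sqrtr_gt0 ?ltr0n // subr_gt0.
have delta_sqr : l%:R * V = (1 - eps) * delta ^+ 2.
  rewrite expr_div_n exprMn !sqr_sqrtr ?ler0n ?ltW ?subr_gt0 // -/V.
  by rewrite [RHS]mulrC divfK // gt_eqF // subr_gt0.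
have Pl_ge0 v : 0 <= Pl v by apply: prodr_ge0 => i _; rewrite ltW ?Pb_gt0.
have sum_Pl : \sum_v Pl v = 1 by exact: (sum_prod_mass l (sum_Pb wt hq beta)).
have sum_dev2 : \sum_v Pl v * dev v ^+ 2 = l%:R * V.
  by rewrite /dev ht -hbeta (sum_prod_Pb_sqr wt hq).
have window_mass : eps <= \sum_(v | `|dev v| < delta) Pl v.
  have := chebyshev_mass dev Pl_ge0 sum_Pl delta_gt0.
  rewrite sum_dev2 delta_sqr mulfK ?gt_eqF ?exprn_gt0 //; lra.
have Q_ge0 : 0 <= qpow q (l%:R * H - `|beta| * delta) by rewrite qpowE ?expR_ge0.
apply: le_trans (window_sum_ge_card wt l t delta_gt0).
apply: le_trans (ler_wpM2r Q_ge0 window_mass) _.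
rewrite mulr_suml; apply: ler_sum => v /ltW near_t.
by apply: (prod_Pb_mul_le hq); rewrite hbeta -ht.
Qed.
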